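(* Let $\mathcal{P}$ be a finite nonempty set of stochastic trees and $\Pi=(G,\{[s]\}_{s\in S_\mathcal{P}})$ a stochastic partition of $S_\mathcal{P}$. Then the quotient $\mathcal{P}/\Pi$ is a well-defined LPTS; that is, for every transition $(g,a,\mu)$ of $\mathcal{P}/\Pi$, $\mu$ is a probability distribution on $G$.
   Context: $\mathrm{Dist}(S)$ is the set of discrete probability distributions on $S$ (rational probabilities), $\delta_g$ the Dirac distribution on $g$. An LPTS is $\langle S,s^0,\alpha,\tau\rangle$ with finite $S$, start $s^0$, finite actions $\alpha$, finite $\tau\subseteq S\times\alpha\times\mathrm{Dist}(S)$; write $s\xrightarrow{a}\mu$. A stochastic tree is an LPTS whose start state is in the support of no transition's distribution and each other state is in the support of exactly one transition's distribution; for a non-start state $s$, $\mathrm{parent}(s)$ is the source state of that unique transition. $S_\mathcal{P}$ is the (disjoint) union of the state sets of the trees in $\mathcal{P}$. A stochastic partition of $S_\mathcal{P}$ is a pair $(G,\{[s]\}_{s\in S_\mathcal{P}})$ with $G\subseteq 2^{S_\mathcal{P}}$, $\bigcup G=S_\mathcal{P}$, and each $[s]$ a partial function $G\to\mathrm{Dist}(G)$ (with the convention $[s](g')(g)=0$ for all $g$ when $[s](g')$ is undefined), such that: (1) there is $g^0\in G$ with $[s^0_P](g)=\delta_{g^0}$ for every $P\in\mathcal{P}$ and every $g\in G$; (2) for every non-start state $s$ and $g\in G$, $[s](g)$ is defined iff $[\mathrm{parent}(s)](g')(g)>0$ for some $g'\in G$; and moreover for all $s\in S_\mathcal{P}$,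 $g\in G$: $s\in g$ iff $[s](g')(g)>0$ for some $g'\in G$. The quotient $\mathcal{P}/\Pi$ has states $G$, start state $g^0$, actions $\bigcup_{P\in\mathcal{P}}\alpha_P$, and $(g,a,\mu)$ is a transition iff some $P\in\mathcal{P}$ has a transition $s\xrightarrow{a}\mu_p$ with $s\in g$ and, for every $g'\in G$, $\mu(g')=\sum_{s'\in g'}[s'](g)(g')\cdot\mu_p(s')$. *)

From HB Require Import structures.
From mathcomp Require Import all_boot all_order all_algebra.
Set Implicit Arguments. Unset Strict Implicit. Unset Printing Implicit Defensive.
Import Order.TTheory GRing.Theory Num.Theory.
Local Open Scope ring_scope.

Definition isDist (T : finType) (mu : {ffun T -> rat}) : Prop :=
  (forall x, 0 <= mu x) /\ \sum_(x : T) mu x = 1.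

Definition dirac (T : finType) (g : T) : {ffun T -> rat} := [ffun x => (x == g)%:R].

(* An LPTS over a common (finite) universe of action names A.  The transition
   relation is a finite list of triples (s, a, mu). *)
Record LPTS (A : finType) := MkLPTS {
  st : finType;
  start : st;
  acts : {set A};
  trans : seq (st * A * {ffun st -> rat})
}.

(* Well-formedness: tau is a (duplicate-free) subset of S x alpha x Dist(S). *)
Definition is_LPTS (A : finType) (L : LPTS A) : Prop :=
  uniq (trans L) /\
  forall s a mu, (s, a, mu) \in trans L -> a \in acts L /\ isDist mu.

Definition is_stoch_tree (A : finType) (L : LPTS A) : Prop :=
  [/\ is_LPTS L,
      (forall t, t \in trans L -> t.2 (start L) = 0) &
      (forall s, s != start L -> count (fun t : st L * A * {ffun st L -> rat} => 0 < t.2 s) (trans L) = 1%N)].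

Definition is_parent (A : finType) (L : LPTS A) (s p : st L) : Prop :=
  exists a mu, (p, a, mu) \in trans L /\ 0 < mu s.

Notation SP P := {i : _ & st (P i)}.
Definition inj (A I : finType) (P : I -> LPTS A) (i : I) (s : st (P i)) : SP P :=
  @Tagged I i (fun j => st (P j)) s.

Notation GT G := {g : {set _} | g \in G}.

(* Value [s](g')(g), with the convention 0 when [s](g') is undefined. *)
Definition pv (T : finType) (G : {set {set T}})
  (part : T -> GT G -> option {ffun GT G -> rat}) (s : T) (g' g : GT G) : rat :=
  if part s g' is Some d then d g else 0.

Definition stoch_partition (A I : finType) (P : I -> LPTS A)
  (G : {set {set SP P}}) (part : SP P -> GT G -> option {ffun GT G -> rat}) : Prop :=
  [/\ (forall s : SP P, exists g : GT G, s \in val g),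
      (forall s g d, part s g = Some d -> isDist d),
      (exists g0 : GT G, forall i g, part (inj (start (P i))) g = Some (dirac g0)),
      (forall i (s : st (P i)), s != start (P i) -> forall p, is_parent s p ->
         forall g, part (inj s) g <> None <-> exists g', 0 < pv part (inj p) g' g) &
      (forall (s : SP P) (g : GT G), s \in val g <-> exists g', 0 < pv part s g' g)].

Definition qtrans (A I : finType) (P : I -> LPTS A)
  (G : {set {set SP P}}) (part : SP P -> GT G -> option {ffun GT G -> rat})
  (g : GT G) (a : A) (mu : {ffun GT G -> rat}) : Prop :=
  exists i (s : st (P i)) (mup : {ffun st (P i) -> rat}),
    [/\ (s, a, mup) \in trans (P i), inj s \in val g &
        forall g' : GT G,
          mu g' = \sum_(s' : st (P i) | inj s' \in val g') pv part (inj s') g g' * mup s'].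

From mathcomp Require Import all_boot all_order all_algebra.
Import Order.TTheory GRing.Theory Num.Theory.
Set Implicit Arguments. Unset Strict Implicit. Unset Printing Implicit Defensive.
Local Open Scope ring_scope.

(* The weight of [g'] in a quotient transition out of [g] is the expectation,
   under the tree distribution [mup], of [[s'](g)(g')].  So [mu] is a mixture
   of the distributions [[s'](g)], and it suffices that each of them is
   defined for [s'] in the support of [mup]: the successor [s'] is not a
   start state, its parent [s] lies in [g], and the partition axioms make
   [[s'](g)] defined exactly there. *)

Lemma isDist_mixture (S T : finType) (mu : {ffun S -> rat}) (K : S -> T -> rat)
    (nu : {ffun T -> rat}) :
  isDist mu ->
  (forall s, 0 < mu s -> (forall t, 0 <= K s t) /\ \sum_t K s t = 1) ->
  (forall t, nu t = \sum_s K s t * mu s) ->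
  isDist nu.
Proof.
move=> [mu_ge0 mu_sum1] K_dist nuE.
have mu_eq0_or_pos s : mu s = 0 \/ 0 < mu s.
  by have := mu_ge0 s; rewrite le_eqVlt => /orP [/eqP <-|]; [left|right].
split.
- move=> t; rewrite nuE; apply: sumr_ge0 => s _.
  have [->|mu_pos] := mu_eq0_or_pos s; first by rewrite mulr0.
  by apply: mulr_ge0 => //; case: (K_dist s mu_pos).
- under eq_bigr => t _ do rewrite nuE.
  rewrite exchange_big /= -mu_sum1; apply: eq_bigr => s _.
  rewrite -mulr_suml; have [->|mu_pos] := mu_eq0_or_pos s; first by rewrite mulr0.
  by case: (K_dist s mu_pos) => _ ->; rewrite mul1r.
Qed.

Lemma stoch_tree_succ_neq_start (A : finType) (L : LPTS A) (s s' : st L) (a : A)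
    (mu : {ffun st L -> rat}) :
  is_stoch_tree L -> (s, a, mu) \in trans L -> 0 < mu s' -> s' != start L.
Proof.
case=> _ start_unreached _ sa_mu mu_pos; apply/eqP => s'_start.
by move: mu_pos; rewrite s'_start (start_unreached _ sa_mu) ltxx.
Qed.

Section PartitionValues.

Variables (T : finType) (G : {set {set T}}).
Variable part : T -> GT G -> option {ffun GT G -> rat}.
Hypothesis part_dist : forall s g d, part s g = Some d -> isDist d.
Hypothesis part_mem : forall s (g : GT G), s \in val g <-> exists g', 0 < pv part s g' g.

Lemma pv_ge0 s (g' g : GT G) : 0 <= pv part s g' g.
Proof. by rewrite /pv; case E: (part s g') => [d|] //; case: (part_dist E). Qed.

Lemma pv_notin s (g' g : GT G) : s \notin val g -> pv part s g' g = 0.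
Proof.
move=> s_notin; apply/eqP; apply: contraNT s_notin => pv_neq0.
by apply/part_mem; exists g'; rewrite lt_def pv_neq0 pv_ge0.
Qed.

Lemma sum_pv_defined s (g : GT G) : part s g <> None -> \sum_g' pv part s g g' = 1.
Proof. by rewrite /pv; case E: (part s g) => [d|] // _; case: (part_dist E). Qed.

Lemma sum_pv_mem (I : finType) (f : I -> T) (g g' : GT G) (w : I -> rat) :
  \sum_(i | f i \in val g') pv part (f i) g g' * w i
  = \sum_i pv part (f i) g g' * w i.
Proof.
rewrite [RHS](bigID (fun i => f i \in val g')) /=.
by rewrite [X in _ + X]big1 ?addr0 // => i /pv_notin ->; rewrite mul0r.
Qed.

End PartitionValues.

Lemma quotient_succ_defined (A I : finType) (P : I -> LPTS A)
    (G : {set {set SP P}}) (part : SP P -> GT G -> option {ffun GT G -> rat})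
    i (s s' : st (P i)) (a : A) (mup : {ffun st (P i) -> rat}) (g : GT G) :
  is_stoch_tree (P i) -> stoch_partition part ->
  (s, a, mup) \in trans (P i) -> inj s \in val g -> 0 < mup s' ->
  part (inj s') g <> None.
Proof.
move=> tree [_ _ _ part_def part_mem] sa_mup s_in_g mup_pos.
have parent : is_parent s' s by exists a, mup.
have s'_neq_start := stoch_tree_succ_neq_start tree sa_mup mup_pos.
apply: (part_def i s' s'_neq_start s parent g).2.
exact: (part_mem _ _).1 s_in_g.
Qed.

Theorem lemma8 (A I : finType) (P : I -> LPTS A)
  (G : {set {set SP P}}) (part : SP P -> GT G -> option {ffun GT G -> rat}) :
  (exists i : I, True) ->
  (forall i, is_stoch_tree (P i)) ->
  @stoch_partition A I P G part ->
  forall (g : GT G) (a : A) (mu : {ffun GT G -> rat}),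
    @qtrans A I P G part g a mu -> isDist mu.
Proof.
move=> _ trees Pi g a mu [i [s [mup [sa_mup s_in_g muE]]]].
have [_ part_dist _ _ part_mem] := Pi.
have [[_ tree_dist] _ _] := trees i.
apply: (isDist_mixture (mu := mup) (K := fun s' g' => pv part (inj s') g g')).
- by case: (tree_dist _ _ _ sa_mup).
- move=> s' mup_pos /=; split=> [g'|]; first exact: pv_ge0 part_dist (inj s') g g'.
  by rewrite (sum_pv_defined part_dist (quotient_succ_defined (trees i) Pi sa_mup s_in_g mup_pos)).
- by move=> g'; rewrite muE (sum_pv_mem part_dist part_mem (@inj A I P i)).
Qed.
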